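(* For every graph $G$ and every $\tau\ge1$, $$|Q_{\mathrm{Del\text{-}N}}(G,3\tau)|\le3\cdot|Q_{\mathrm{LP\text{-}Del\text{-}N}}(G,\tau)|.$$
   Context: Graphs are finite, simple, undirected; $\deg(H)$ is the maximum degree; $E(v)$ is the set of edges at $v$. $H\subseteq G$ means $H$ is obtained from $G$ by deleting a set of nodes with all incident edges. $Q_{\mathrm{Del\text{-}N}}(G,t)=-\min\{|V(G)|-|V(G^* )|: G^*\subseteq G,\ \deg(G^* )\le t\}$. $Q_{\mathrm{LP\text{-}Del\text{-}N}}(G,\tau)$ is the optimal value of the LP: maximize $-\sum_{v\in V}x_v$ subject to $y_e\ge1-x_{v'}-x_{v''}$ for every edge $e=(v',v'')$, $\sum_{e\in E(v)}y_e\le\tau$ for every node $v$, and $x_v,y_e\in[0,1]$. *)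

From HB Require Import structures.
From mathcomp Require Import all_boot all_order all_algebra.
From mathcomp Require Import classical_sets reals.
Set Implicit Arguments. Unset Strict Implicit. Unset Printing Implicit Defensive.
Import Order.TTheory GRing.Theory Num.Theory.

Local Open Scope ring_scope.

Definition simple_graph (T : finType) (adj : rel T) : Prop :=
  symmetric adj /\ irreflexive adj.

Section Graph.
Variables (T : finType) (adj : rel T).

Definition edges : {set {set T}} := [set [set u; v] | u in T, v in T & adj u v].

Definition edges_at (v : T) : {set {set T}} := [set e in edges | v \in e].

Definition deg_in (K : {set T}) (v : T) : nat := #|[set u in K | adj v u]|.

Definition maxdeg (K : {set T}) : nat := \max_(v in K) deg_in K v.

(* Gs is described by its kept vertex set K. Deleting all vertices is always
   feasible, so #|T| is a valid default for the minimum. *)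
Definition min_deletion {R : realType} (t : R) : nat :=
  \big[minn/#|T|]_(K : {set T} | (maxdeg K)%:R <= t) (#|T| - #|K|)%N.

Definition Q_DelN {R : realType} (t : R) : R := - (min_deletion t)%:R.

Definition LP_feasible {R : realType} (tau : R) (x : T -> R) (y : {set T} -> R)
  : Prop :=
  [/\ (forall u v, adj u v -> y [set u; v] >= 1 - x u - x v),
      (forall v, \sum_(e in edges_at v) y e <= tau),
      (forall v, 0 <= x v <= 1) &
      (forall e, e \in edges -> 0 <= y e <= 1)].

Definition Q_LPDelN {R : realType} (tau : R) : R :=
  sup [set (- \sum_v x v) | x in
         [set x : T -> R | exists y : {set T} -> R, LP_feasible tau x y]]%classic.

End Graph.

From HB Require Import structures.
From mathcomp Require Import all_boot all_order all_algebra.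
From mathcomp Require Import classical_sets reals.
From mathcomp Require Import lra.
Set Implicit Arguments. Unset Strict Implicit. Unset Printing Implicit Defensive.
Import Order.TTheory GRing.Theory Num.Theory.
Local Open Scope ring_scope.

(* Threshold rounding of the LP at 1/3.  Given a feasible (x, y), keep the
   vertices with x_v < 1/3.  An edge between two kept vertices has
   y_e >= 1 - x_u - x_v > 1/3, so the LP degree bound sum_(e at v) y_e <= tau
   leaves every kept vertex at most 3 tau kept neighbours; every deleted
   vertex carries x_v >= 1/3, so at most 3 sum_v x_v vertices are deleted.
   Both Q values are nonpositive, which turns the resulting inequality
   Q_LP <= Q_Del / 3 into the claimed bound on absolute values. *)

Lemma geq_bigminn_cond (I : finType) (P : pred I) (F : I -> nat) a i0 :
  P i0 -> (\big[minn/a]_(i | P i) F i <= F i0)%N.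
Proof.
move=> Pi0; rewrite unlock.
have : i0 \in index_enum I by rewrite mem_index_enum.
elim: (index_enum I) => //= j r IH; rewrite inE => /orP[/eqP<-|/IH le_r].
  by rewrite Pi0 geq_minl.
by case: (P j) => //; apply: leq_trans (geq_minr _ _) le_r.
Qed.

Section Rounding.

Variables (R : realType) (T : finType) (adj : rel T).

Lemma maxdeg_le (K : {set T}) (t : R) : 0 <= t ->
  (forall v, v \in K -> (deg_in adj K v)%:R <= t) -> (maxdeg adj K)%:R <= t.
Proof.
move=> t_ge0 deg_le; apply: (big_ind (fun n : nat => n%:R <= t)) => //.
by move=> m n le_m le_n; rewrite /maxn; case: ifP.
Qed.

Lemma min_deletion_le (t : R) (K : {set T}) : (maxdeg adj K)%:R <= t ->
  (min_deletion adj t <= #|T| - #|K|)%N.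
Proof. exact: geq_bigminn_cond. Qed.

Hypothesis adj_irr : irreflexive adj.

Lemma sum_neighbours_le_edges_at (y : {set T} -> R) (v : T) (S : {set T}) :
  (forall e, e \in edges adj -> 0 <= y e) -> (forall u, u \in S -> adj v u) ->
  \sum_(u in S) y [set v; u] <= \sum_(e in edges_at adj v) y e.
Proof.
move=> y_ge0 S_adj.
have inj : {in S &, injective (fun u => [set v; u])}.
  move=> u1 u2 /S_adj adj1 _ eq12.
  have : u1 \in [set v; u2] by rewrite -eq12 set22.
  rewrite !inE => /orP[/eqP u1v|/eqP //].
  by move: adj1; rewrite u1v adj_irr.
have sub : [set [set v; u] | u in S] \subset edges_at adj v.
  apply/fintype.subsetP => _ /finset.imsetP[u /S_adj adj_vu ->].
  rewrite inE set21 andbT.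
  by apply/imset2P; exists v u; rewrite ?inE.
rewrite -(big_imset _ inj) /= [X in _ <= X](big_setID [set [set v; u] | u in S]).
rewrite (finset.setIidPr sub) /= lerDl sumr_ge0 // => e.
by rewrite !inE => /andP[_ /andP[/y_ge0]].
Qed.

Variables (tau : R) (x : T -> R) (y : {set T} -> R).
Hypotheses (tau_ge0 : 0 <= tau) (feas : LP_feasible adj tau x y).

Let kept := [set v | x v < 3^-1].

Lemma kept_edge_weight_ge u v : u \in kept -> v \in kept -> adj u v ->
  3^-1 <= y [set u; v].
Proof.
case: feas => y_cover _ _ _; rewrite !inE => xu xv /y_cover; lra.
Qed.

Lemma deg_in_kept_le v : v \in kept -> (deg_in adj kept v)%:R <= 3 * tau.
Proof.
case: feas => _ deg_tau _ y01 v_kept.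
set S := [set u in kept | adj v u].
have y_ge0 e : e \in edges adj -> 0 <= y e by move=> /y01 /andP[].
have S_adj u : u \in S -> adj v u by rewrite inE => /andP[].
have S_weight : \sum_(u in S) (3^-1 : R) <= \sum_(u in S) y [set v; u].
  by apply: ler_sum => u; rewrite inE => /andP[u_kept]; apply: kept_edge_weight_ge.
have := sum_neighbours_le_edges_at y_ge0 S_adj.
move: S_weight; rewrite sumr_const -mulr_natr.
have := deg_tau v; rewrite /deg_in -/S; lra.
Qed.

Lemma card_deleted_le : #|~: kept|%:R <= 3 * \sum_v x v.
Proof.
case: feas => _ _ x01 _.
have : \sum_(v in ~: kept) (3^-1 : R) <= \sum_v x v.
  rewrite [X in _ <= X](bigID (mem (~: kept))) /=.
  rewrite -[X in X <= _]addr0 lerD //; last by apply: sumr_ge0 => v _; case/andP: (x01 v).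
  by apply: ler_sum => v; rewrite !inE -leNgt.
rewrite sumr_const -mulr_natr; lra.
Qed.

Lemma min_deletion_le_LP : (min_deletion adj (3 * tau))%:R <= 3 * \sum_v x v.
Proof.
have tau3_ge0 : 0 <= 3 * tau by rewrite mulr_ge0.
have := min_deletion_le (maxdeg_le tau3_ge0 deg_in_kept_le).
rewrite -(cardsC kept) addKn -(ler_nat R) => /le_trans; apply.
exact: card_deleted_le.
Qed.

End Rounding.

Lemma LP_feasible_ones (R : realType) (T : finType) (adj : rel T) (tau : R) :
  0 <= tau -> LP_feasible adj tau (fun _ => 1) (fun _ => 0).
Proof.
move=> tau_ge0; split=> [u v _|v|v|e _]; rewrite ?lexx ?ler01 //; first lra.
by rewrite big1.
Qed.

Lemma Q_LPDelN_le (R : realType) (T : finType) (adj : rel T) (tau : R) :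
  irreflexive adj -> 0 <= tau ->
  Q_LPDelN adj tau <= - ((min_deletion adj (3 * tau))%:R / 3).
Proof.
move=> adj_irr tau_ge0; apply: ge_sup.
  exists (- \sum_(v : T) 1), (fun _ => 1) => //.
  by exists (fun _ => 0); apply: LP_feasible_ones.
move=> _ [x [y feas] <-].
have := min_deletion_le_LP adj_irr tau_ge0 feas; lra.
Qed.

Theorem mainTheorem7 (R : realType) (T : finType) (adj : rel T)
  (G : simple_graph adj) (tau : R) (htau : 1 <= tau) :
  `| Q_DelN adj (3 * tau) | <= 3 * `| Q_LPDelN adj tau |.
Proof.
have tau_ge0 : 0 <= tau by lra.
have := Q_LPDelN_le G.2 tau_ge0.
rewrite /Q_DelN normrN normr_nat.
set m := min_deletion adj (3 * tau).
have m_ge0 : 0 <= (m%:R : R) by [].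
move=> Q_le; rewrite ler0_norm; lra.
Qed.
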